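(* In $\mathbb{Z}[q,q^{-1}][[x,y]]$, \[ \sum_{i=1}^{\infty}q^i[i]!\,x^iy^i\prod_{j=0}^{i}\frac{1}{q^j-q^j[j+1]x+[j]xy}=\frac{-y}{q(1-x)}+\sum_{i\ge1}\frac{q^{-i^2-i-1}y^i(q^{2i+1}-y)}{q^i-q^i[i+1]x+[i]xy}. \]
   Context: $[m]=1+q+\dots+q^{m-1}$ for $m\ge0$ ($[0]=0$), $[i]!=\prod_{m=1}^i[m]$. Each fraction denotes the inverse of its denominator in $\mathbb{Z}[q,q^{-1}][[x,y]]$ (the denominators have invertible constant term $q^j$). *)

(* Formal power series in two variables x, y over a
   commutative ring R, represented by their coefficient functions:
   f a b = coefficient of x^a y^b. *)
From HB Require Import structures.
From mathcomp Require Import all_boot all_order all_algebra.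
Set Implicit Arguments. Unset Strict Implicit. Unset Printing Implicit Defensive.
Import Order.TTheory GRing.Theory Num.Theory.
Local Open Scope ring_scope.

Definition ps (R : Type) := nat -> nat -> R.

Section PS.
Variable R : comUnitRingType.

Definition psC (c : R) : ps R := fun a b => if (a == 0)%N && (b == 0)%N then c else 0.
Definition psX : ps R := fun a b => if (a == 1)%N && (b == 0)%N then 1 else 0.
Definition psY : ps R := fun a b => if (a == 0)%N && (b == 1)%N then 1 else 0.

Definition psadd (f g : ps R) : ps R := fun a b => f a b + g a b.
Definition psopp (f : ps R) : ps R := fun a b => - f a b.
Definition psscale (c : R) (f : ps R) : ps R := fun a b => c * f a b.
Definition psmul (f g : ps R) : ps R := fun a b =>
  \sum_(i < a.+1) \sum_(j < b.+1) f i j * g (a - i)%N (b - j)%N.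
Definition psexp (f : ps R) (n : nat) : ps R := iter n (psmul f) (psC 1).

(* Inverse of a series f whose constant term c = f 0 0 is a unit:
   f = c (1 - h) with h := 1 - c^-1 f having zero constant term, and
   f^-1 = c^-1 \sum_k h^k; the coefficient of x^a y^b only involves k <= a+b. *)
Definition psinv (f : ps R) : ps R :=
  let c := f 0%N 0%N in
  let h := psadd (psC 1) (psopp (psscale c^-1 f)) in
  fun a b => c^-1 * \sum_(k < (a + b).+1) psexp h k a b.

Definition has_sum (F : nat -> ps R) (S : ps R) : Prop :=
  forall a b, exists N, forall n, (N <= n)%N -> \sum_(i < n) F i a b = S a b.

Definition qint (q : R) (m : nat) : R := \sum_(k < m) q ^+ k.
Definition qfact (q : R) (i : nat) : R := \prod_(1 <= m < i.+1) qint q m.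

Definition den (q : R) (j : nat) : ps R :=
  psadd (psC (q ^+ j))
    (psadd (psopp (psscale (q ^+ j * qint q j.+1) psX))
           (psscale (qint q j) (psmul psX psY))).

End PS.

From HB Require Import structures.
From mathcomp Require Import all_boot all_order all_algebra.
From mathcomp Require Import boolp ring zify.
Set Implicit Arguments. Unset Strict Implicit. Unset Printing Implicit Defensive.
Import GRing.Theory.
Local Open Scope ring_scope.

(* Write D_j for the denominator, Q m k := 1/(D_m ... D_(m+k)),
   a_m := q^(-m(m-1)) y^m and c_k := q^k [k]! x^k.  Since
   q^(k+1) D_m - D_(m+k+1) = [k+1] x (q^(2m+k+2) - y), the products satisfy
   Q (m+1) k - q^(-k-1) Q m k = [k+1] q^(-k-1) x (q^(2m+k+2) - y) Q m (k+1),
   and summation by parts over m turns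
   V_k := sum_m c_k y^k (a_m - q^(-k-1) a_(m+1)) Q m k
   into c_k y^k Q 0 k + V_(k+1).  As V_k = O(x^k), iterating gives
   V_0 = sum_k c_k y^k Q 0 k: the k-th term is the k-th summand on the left,
   the m-th term of V_0 is the m-th summand on the right, and the two terms
   k = 0 and m = 0 account for -y/(q(1-x)).  All sums are truncated: the
   remainder after n steps is O(y^n), so each coefficient is a finite sum. *)

Lemma big_ord_triangle (V : nmodType) (F : nat -> nat -> V) a :
  \sum_(i < a.+1) \sum_(j < i.+1) F j i =
  \sum_(j < a.+1) \sum_(k < (a - j).+1) F j (j + k)%N.
Proof.
elim: a => [|a IH]; first by rewrite !big_ord1.
rewrite big_ord_recr /= IH [RHS]big_ord_recr /= subnn big_ord1 addn0.
rewrite [\sum_(j < a.+2) F j a.+1]big_ord_recr /= addrA -big_split /=.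
congr (_ + _); apply: eq_bigr => j _.
have ja : (j <= a)%N by rewrite -ltnS.
by rewrite subSn // [RHS]big_ord_recr /= addnS subnKC.
Qed.

Lemma big_ord_vanishing_widen (V : nmodType) (F : nat -> V) n m :
  (n <= m)%N -> (forall k, (n <= k)%N -> F k = 0) ->
  \sum_(k < m) F k = \sum_(k < n) F k.
Proof.
move=> le_nm F0; rewrite -(subnKC le_nm) big_split_ord /=.
by rewrite [X in _ + X]big1 ?addr0 // => k _; rewrite F0 ?leq_addr.
Qed.

Lemma big_ord_summation_by_parts (S : comPzRingType) (a g : nat -> S) (l : S) n :
  \sum_(m < n.+1) (a m - l * a m.+1) * g m =
  a 0%N * g 0%N + \sum_(m < n) a m.+1 * (g m.+1 - l * g m) - l * a n.+1 * g n.
Proof.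
elim: n => [|n IH]; first by rewrite big_ord1 big_ord0; ring.
by rewrite big_ord_recr /= IH [\sum_(m < n.+1) _]big_ord_recr /=; ring.
Qed.

Section PowerSeriesRing.
Variable R : comUnitRingType.
Implicit Types f g h : ps R.

(* boolp provides classical eqType and choiceType structures on any type. *)
HB.instance Definition _ := Choice.on (ps R).

Lemma psP f g : (forall a b, f a b = g a b) -> f = g.
Proof. by move=> fg; do 2![apply: funext => ?]. Qed.

Fact psmulA : associative (@psmul R).
Proof.
move=> f g h; apply: psP => a b; rewrite /psmul; symmetry.
transitivity (\sum_(i < a.+1) \sum_(i1 < i.+1) \sum_(j < b.+1) \sum_(j1 < j.+1)
   f i1 j1 * g (i - i1)%N (j - j1)%N * h (a - i)%N (b - j)%N).
  apply: eq_bigr => i _; under eq_bigr do rewrite mulr_suml.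
  by rewrite exchange_big; apply: eq_bigr => i1 _; under eq_bigr do rewrite mulr_suml.
rewrite (big_ord_triangle (fun i1 i => \sum_(j < b.+1) \sum_(j1 < j.+1)
   f i1 j1 * g (i - i1)%N (j - j1)%N * h (a - i)%N (b - j)%N)).
apply: eq_bigr => i1 _; under [RHS]eq_bigr do rewrite mulr_sumr.
rewrite [RHS]exchange_big; apply: eq_bigr => k _.
rewrite (big_ord_triangle (fun j1 j =>
   f i1 j1 * g (i1 + k - i1)%N (j - j1)%N * h (a - (i1 + k))%N (b - j)%N)).
apply: eq_bigr => j1 _.
by rewrite mulr_sumr; apply: eq_bigr => l _; rewrite mulrA !addKn !subnDA.
Qed.

Fact psmulC : commutative (@psmul R).
Proof.
move=> f g; apply: psP => a b; rewrite /psmul (reindex_inj rev_ord_inj).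
apply: eq_bigr => i _; rewrite (reindex_inj rev_ord_inj); apply: eq_bigr => j _.
by rewrite /= !subSS !subKn 1?mulrC // -ltnS.
Qed.

Fact psmul_psC_coef c f a b : psmul (psC c) f a b = c * f a b.
Proof.
rewrite /psmul big_ord_recl big_ord_recl /psC /= !subn0 !big1 ?addr0 // => i _.
  by rewrite big1 // => j _; rewrite mul0r.
by rewrite mul0r.
Qed.

Fact psmul1 : left_id (psC 1) (@psmul R).
Proof. by move=> f; apply: psP => a b; rewrite psmul_psC_coef mul1r. Qed.

Fact psmulDl : left_distributive (@psmul R) (@psadd R).
Proof.
move=> f g h; apply: psP => a b; rewrite /psmul /psadd -big_split.
by apply: eq_bigr => i _; rewrite -big_split; apply: eq_bigr => j _; apply: mulrDl.
Qed.

Fact psaddA : associative (@psadd R).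
Proof. by move=> f g h; apply: psP => a b; apply: addrA. Qed.
Fact psaddC : commutative (@psadd R).
Proof. by move=> f g; apply: psP => a b; apply: addrC. Qed.
Fact psadd0 : left_id (fun _ _ => 0) (@psadd R).
Proof. by move=> f; apply: psP => a b; apply: add0r. Qed.
Fact psaddN : left_inverse (fun _ _ => 0) (@psopp R) (@psadd R).
Proof. by move=> f; apply: psP => a b; apply: addNr. Qed.
Fact psC1_neq0 : psC 1 != (fun _ _ => 0 : R).
Proof. by apply/eqP => /(congr1 (fun f => f 0%N 0%N)) /eqP; rewrite oner_eq0. Qed.

HB.instance Definition _ := GRing.isZmodule.Build (ps R) psaddA psaddC psadd0 psaddN.
HB.instance Definition _ :=
  GRing.Zmodule_isComNzRing.Build (ps R) psmulA psmulC psmul1 psmulDl psC1_neq0.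

Lemma psaddE (f g : ps R) a b : (f + g) a b = f a b + g a b. Proof. by []. Qed.
Lemma psoppE (f : ps R) a b : (- f) a b = - f a b. Proof. by []. Qed.
Lemma psmulE (f g : ps R) a b :
  (f * g) a b = \sum_(i < a.+1) \sum_(j < b.+1) f i j * g (a - i)%N (b - j)%N.
Proof. by []. Qed.
Lemma mul_psC_coef (c : R) (f : ps R) a b : (psC c * f) a b = c * f a b.
Proof. exact: psmul_psC_coef. Qed.

Fact psC_is_zmod_morphism : zmod_morphism (@psC R : R -> ps R).
Proof.
by move=> c d; apply: psP => a b; rewrite psaddE psoppE /psC; case: ifP; rewrite ?subr0.
Qed.
Fact psC_is_monoid_morphism : monoid_morphism (@psC R : R -> ps R).
Proof.
split=> // c d; apply: psP => a b.
by rewrite mul_psC_coef /psC; case: ifP; rewrite ?mulr0.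
Qed.
HB.instance Definition _ :=
  GRing.isZmodMorphism.Build R (ps R) (@psC R) psC_is_zmod_morphism.
HB.instance Definition _ :=
  GRing.isMonoidMorphism.Build R (ps R) (@psC R) psC_is_monoid_morphism.

Lemma psscaleE (c : R) (f : ps R) : psscale c f = psC c * f.
Proof. by apply: psP => a b; rewrite mul_psC_coef. Qed.

Lemma psexpE (f : ps R) n : psexp f n = f ^+ n.
Proof. by elim: n => //= n ->; rewrite exprS. Qed.

Lemma ps_sumE I r (P : pred I) (F : I -> ps R) a b :
  (\sum_(i <- r | P i) F i) a b = \sum_(i <- r | P i) F i a b.
Proof. by apply: (big_morph (fun f : ps R => f a b)). Qed.

End PowerSeriesRing.

Lemma eq_has_sum (R : comUnitRingType) (F G : nat -> ps R) (S : ps R) :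
  (forall i, F i = G i) -> has_sum G S -> has_sum F S.
Proof. by move=> FG; rewrite (funext FG). Qed.

Lemma has_sum_finite (R : comUnitRingType) (F : nat -> ps R) (N : nat -> nat -> nat) :
  (forall a b i, (N a b <= i)%N -> F i a b = 0) ->
  has_sum F (fun a b => \sum_(i < N a b) F i a b).
Proof.
move=> F0 a b; exists (N a b) => n le_Nn.
by apply: (big_ord_vanishing_widen (F := fun i => F i a b)) => // i; apply: F0.
Qed.

(* [order_ge u v n f]: f has no monomial x^a y^b of weighted degree u a + v b
   below n; (u, v) = (1, 0), (0, 1), (1, 1) give the x-adic, y-adic and
   total-degree orders. *)
Definition order_ge (R : comUnitRingType) (u v n : nat) (f : ps R) :=
  forall a b, (u * a + v * b < n)%N -> f a b = 0.

Section Order.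
Variables (R : comUnitRingType) (u v : nat).
Implicit Types f g h : ps R.

Lemma order_ge_le m n f : (m <= n)%N -> order_ge u v n f -> order_ge u v m f.
Proof. by move=> le_mn fn a b lt_m; apply: fn; apply: leq_trans le_mn. Qed.

Lemma order_geD n f g : order_ge u v n f -> order_ge u v n g -> order_ge u v n (f + g).
Proof. by move=> fn gn a b lt_n; rewrite psaddE fn ?gn ?addr0. Qed.

Lemma order_geN n f : order_ge u v n f -> order_ge u v n (- f).
Proof. by move=> fn a b lt_n; rewrite psoppE fn ?oppr0. Qed.

Lemma order_geB n f g : order_ge u v n f -> order_ge u v n g -> order_ge u v n (f - g).
Proof. by move=> fn gn; apply: order_geD => //; apply: order_geN. Qed.

Lemma order_ge_sum I r (P : pred I) (F : I -> ps R) n :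
  (forall i, P i -> order_ge u v n (F i)) -> order_ge u v n (\sum_(i <- r | P i) F i).
Proof.
move=> Fn; elim/big_rec: _ => [//|i f Pi fn].
by apply: order_geD => //; apply: Fn.
Qed.

Lemma order_geM m n f g :
  order_ge u v m f -> order_ge u v n g -> order_ge u v (m + n) (f * g).
Proof.
move=> fm gn a b lt_mn; rewrite psmulE big1 // => [[i /= le_ia]] _.
rewrite big1 // => [[j /= le_jb]] _.
have wD : (u * i + v * j + (u * (a - i) + v * (b - j)) = u * a + v * b)%N.
  by rewrite addnACA -!mulnDr !subnKC // -ltnS.
case: (ltnP (u * i + v * j) m) => [/fm -> | le_m]; first by rewrite mul0r.
by rewrite gn ?mulr0 //; lia.
Qed.

Lemma order_geMl n f g : order_ge u v n g -> order_ge u v n (f * g).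
Proof. by move=> gn; rewrite -[n]add0n; apply: order_geM. Qed.

Lemma order_geMr n f g : order_ge u v n f -> order_ge u v n (f * g).
Proof. by rewrite mulrC; apply: order_geMl. Qed.

Lemma order_geX n k f : order_ge u v n f -> order_ge u v (n * k) (f ^+ k).
Proof.
move=> fn; elim: k => [|k IH]; first by rewrite muln0.
by rewrite exprS mulnS; apply: order_geM.
Qed.

Lemma order_ge_mul_coef n f g h a b :
  order_ge u v n (f - g) -> (u * a + v * b < n)%N -> (f * h) a b = (g * h) a b.
Proof.
move=> fgn lt_n; apply/eqP; rewrite -subr_eq0 -psoppE -psaddE -mulrBl.
by rewrite (order_geMr h fgn).
Qed.

End Order.

Section Inverse.
Variable R : comUnitRingType.

Lemma mulVps (f : ps R) : f 0%N 0%N \is a GRing.unit -> psinv f * f = 1.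
Proof.
move=> f00; apply: psP => a b.
set c := f 0%N 0%N; set h : ps R := 1 - psC c^-1 * f.
have h_def : psadd (psC 1) (psopp (psscale c^-1 f)) = h by rewrite psscaleE.
have h1 : order_ge 1 1 1 h.
  by move=> [|?] [|?] //= _; rewrite /h psaddE psoppE mul_psC_coef mulVr ?subrr.
have hk k : order_ge 1 1 k (h ^+ k).
  by rewrite -[X in order_ge _ _ X]mul1n; apply: order_geX.
set N := (a + b).+1; set S : ps R := \sum_(k < N) h ^+ k.
have psinv_trunc : order_ge 1 1 N (psinv f - psC c^-1 * S).
  move=> i j; rewrite !mul1n => lt_ij.
  rewrite psaddE psoppE mul_psC_coef /S ps_sumE /psinv -/c h_def.
  apply/eqP; rewrite subr_eq0; apply/eqP; congr (_ * _).
  rewrite (big_ord_vanishing_widen (F := fun k => (h ^+ k) i j) (n := (i + j).+1)) //.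
    by apply: eq_bigr => k _; rewrite psexpE.
  by move=> k lt_k; apply: hk; rewrite !mul1n.
have fE : psC c^-1 * f = 1 - h by rewrite opprB addrC subrK.
have geom : (1 - h) * S = 1 - h ^+ N by rewrite -opprB mulNr -subrX1 opprB.
rewrite (order_ge_mul_coef f psinv_trunc) ?mul1n // mulrAC fE geom.
by rewrite psaddE psoppE hk ?subr0 ?mul1n.
Qed.

Lemma psinv_uniq (f g : ps R) : f 0%N 0%N \is a GRing.unit -> g * f = 1 -> psinv f = g.
Proof. by move=> f00 gf; rewrite -[psinv f]mulr1 -gf mulrCA mulVps ?mulr1. Qed.

End Inverse.

Section Identity.
Variables (R : comUnitRingType) (q : R).
Hypothesis q_unit : q \is a GRing.unit.
Local Notation X := (psX R).
Local Notation Y := (psY R).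
Local Notation p := q^-1.

Lemma qintD a b : qint q (a + b) = qint q a + q ^+ a * qint q b.
Proof.
rewrite /qint big_split_ord /= mulr_sumr.
by congr (_ + _); apply: eq_bigr => i _; rewrite exprD.
Qed.

Lemma qfactS k : qfact q k.+1 = qfact q k * qint q k.+1.
Proof. by rewrite /qfact big_nat_recr. Qed.

Lemma denE j :
  den q j = psC (q ^+ j) - psC (q ^+ j * qint q j.+1) * X + psC (qint q j) * (X * Y).
Proof. by rewrite /den !psscaleE -[RHS]addrA. Qed.

Lemma den_coef00 j : den q j 0%N 0%N = q ^+ j.
Proof.
by rewrite denE !psaddE psoppE !mul_psC_coef /psC psmulE !big_ord1 /psX /= !mulr0 subr0 addr0.
Qed.

Lemma den_shift m k :
  psC (q ^+ k.+1) * den q m - den q (m + k.+1) =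
  X * psC (qint q k.+1) * (psC (q ^+ m * q ^+ k.+1 * q ^+ m.+1) - Y).
Proof.
have qint_mk1 : qint q (m + k.+1).+1 = qint q m.+1 + q ^+ m.+1 * qint q k.+1.
  by rewrite -qintD addSn.
have qint_mk : qint q (m + k.+1) = qint q k.+1 + q ^+ k.+1 * qint q m.
  by rewrite -qintD addnC.
rewrite !denE qint_mk1 qint_mk exprD !rmorphD !rmorphM /=; ring.
Qed.

Lemma mulVden j : psinv (den q j) * den q j = 1.
Proof. by apply: mulVps; rewrite den_coef00 unitrX. Qed.

Lemma expr_mulV n : q ^+ n * p ^+ n = 1.
Proof. by rewrite -exprMn mulrV // expr1n. Qed.

Lemma expr_mulV_cancel n a b : q ^+ (n + a) * p ^+ (n + b) = q ^+ a * p ^+ b.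
Proof. by rewrite !exprD mulrACA expr_mulV mul1r. Qed.

Definition invden_prod m k := \prod_(j < k.+1) psinv (den q (m + j)).

Lemma invden_prod_shift m k : invden_prod m.+1 k = den q m * invden_prod m k.+1.
Proof.
rewrite /invden_prod [in RHS]big_ord_recl addn0 mulrA [den q m * _]mulrC mulVden // mul1r.
by apply: eq_bigr => j _; rewrite addSnnS.
Qed.

Lemma invden_prod_extend m k : invden_prod m k = den q (m + k.+1) * invden_prod m k.+1.
Proof.
by rewrite [invden_prod m k.+1]big_ord_recr /= mulrCA [den q _ * _]mulrC mulVden // mulr1.
Qed.

Lemma invden_prod_step m k :
  invden_prod m.+1 k - psC (p ^+ k.+1) * invden_prod m k =
  X * psC (qint q k.+1 * p ^+ k.+1) * (psC (q ^+ m * q ^+ k.+1 * q ^+ m.+1) - Y) *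
  invden_prod m k.+1.
Proof.
rewrite invden_prod_shift [invden_prod m k]invden_prod_extend.
have qp1 : psC (p ^+ k.+1) * psC (q ^+ k.+1) = 1 :> ps R.
  by rewrite -rmorphM /= mulrC expr_mulV rmorph1.
transitivity (psC (p ^+ k.+1) * (psC (q ^+ k.+1) * den q m - den q (m + k.+1)) *
  invden_prod m k.+1); first by rewrite mulrBr [_ * (_ * den q m)]mulrA qp1 mul1r mulrBl mulrA.
by rewrite den_shift rmorphM /=; ring.
Qed.

Definition yweight m : ps R := psC (p ^+ (m * m.-1)) * Y ^+ m.
Definition xweight k : ps R := psC (q ^+ k * qfact q k) * X ^+ k.
Definition lhs_term k : ps R := xweight k * Y ^+ k * invden_prod 0 k.
Definition tele_term k m : ps R :=
  xweight k * Y ^+ k * (yweight m - psC (p ^+ k.+1) * yweight m.+1) * invden_prod m k.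
Definition tele_sum k n : ps R := \sum_(m < n) tele_term k m.
Definition tele_rest k n : ps R :=
  xweight k * Y ^+ k * psC (p ^+ k.+1) * yweight n.+1 * invden_prod n k.

Lemma tele_term_step k m :
  xweight k * Y ^+ k *
    (yweight m.+1 * (invden_prod m.+1 k - psC (p ^+ k.+1) * invden_prod m k)) =
  tele_term k.+1 m.
Proof.
have scal1 : q ^+ k * p ^+ (m.+1 * m.+1.-1) * p ^+ k.+1 * (q ^+ m * q ^+ k.+1 * q ^+ m.+1) =
    q ^+ k.+1 * p ^+ (m * m.-1).
  have eq_q : (m + m + k.+1 + k.+1 = k + (m + k.+1 + m.+1))%N by lia.
  have eq_p : (m + m + k.+1 + m * m.-1 = m.+1 * m.+1.-1 + k.+1)%N.
    by case: m {eq_q} => //=; nia.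
  by rewrite -[RHS](expr_mulV_cancel (m + m + k.+1)) eq_q eq_p !exprD; ring.
have scal2 : q ^+ k * p ^+ (m.+1 * m.+1.-1) * p ^+ k.+1 =
    q ^+ k.+1 * p ^+ k.+2 * p ^+ (m.+1 * m.+1.-1).
  by rewrite (expr_mulV_cancel 1 k k.+1) mulrAC.
rewrite invden_prod_step /tele_term /xweight /yweight qfactS.
set A := invden_prod m k.+1.
rewrite [X ^+ k.+1]exprS [Y ^+ k.+1]exprS [Y ^+ m.+1]exprS.
set K := psC (qfact q k * qint q k.+1) * X ^+ k * X * Y ^+ k * Y ^+ m * Y * A.
transitivity
  (K * psC (q ^+ k * p ^+ (m.+1 * m.+1.-1) * p ^+ k.+1 * (q ^+ m * q ^+ k.+1 * q ^+ m.+1))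
   - K * Y * psC (q ^+ k * p ^+ (m.+1 * m.+1.-1) * p ^+ k.+1)).
  by rewrite /K !rmorphM /=; ring.
by rewrite scal1 scal2 /K !rmorphM /=; ring.
Qed.

Lemma tele_sumS k n : tele_sum k n.+1 = lhs_term k + tele_sum k.+1 n - tele_rest k n.
Proof.
rewrite /tele_sum; under eq_bigr => m _ do rewrite /tele_term -mulrA.
rewrite -mulr_sumr (big_ord_summation_by_parts yweight (invden_prod^~ k)).
rewrite mulrBr mulrDr mulr_sumr.
under eq_bigr => m _ do rewrite tele_term_step.
by rewrite /lhs_term /tele_rest /yweight /= expr0 rmorph1 !mul1r !mulrA.
Qed.

Lemma order_Xn n : order_ge 1 0 n (X ^+ n).
Proof. by rewrite -[X in order_ge _ _ X]mul1n; apply: order_geX => -[|a] b. Qed.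

Lemma order_Yn n : order_ge 0 1 n (Y ^+ n).
Proof.
rewrite -[X in order_ge _ _ X]mul1n; apply: order_geX => a [|b] //=.
by rewrite /psY andbF.
Qed.

Lemma order_lhs_term k : order_ge 1 0 k (lhs_term k).
Proof. by do 2!apply: order_geMr; apply/order_geMl/order_Xn. Qed.

Lemma order_tele_sum k n : order_ge 1 0 k (tele_sum k n).
Proof.
apply: order_ge_sum => m _.
by do 3!apply: order_geMr; apply/order_geMl/order_Xn.
Qed.

Lemma order_tele_term0 m : order_ge 0 1 m (tele_term 0 m).
Proof.
apply/order_geMr/order_geMl/order_geB; first by apply/order_geMl/order_Yn.
by apply/order_geMl/order_geMl/(order_ge_le (leqnSn m))/order_Yn.
Qed.

Lemma order_tele_rest k n : order_ge 0 1 (n.+1 + k) (tele_rest k n).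
Proof.
rewrite addnC; apply: order_geMr; rewrite -mulrA; apply: order_geM.
  by apply/order_geMl/order_Yn.
by apply/order_geMl/order_geMl/order_Yn.
Qed.

Lemma tele_sum0_expand K n :
  order_ge 0 1 (n + K) (tele_sum 0 (n + K) - \sum_(k < K) lhs_term k - tele_sum K n).
Proof.
elim: K n => [|K IH] n; first by rewrite big_ord0 addn0 subr0 subrr.
have := IH n.+1; rewrite addSnnS tele_sumS big_ord_recr /= => chainK.
set V := tele_sum 0 (n + K.+1).
have -> : V - (\sum_(k < K) lhs_term k + lhs_term K) - tele_sum K.+1 n =
  (V - \sum_(k < K) lhs_term k - (lhs_term K + tele_sum K.+1 n - tele_rest K n)) -
  tele_rest K n by ring.
by apply: order_geB => //; rewrite -addSnnS; apply: order_tele_rest.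
Qed.

Lemma lhs_rhs_coef a b :
  \sum_(k < a.+1) lhs_term k a b = \sum_(m < b.+1) tele_term 0 m a b.
Proof.
have := @tele_sum0_expand a.+1 b.+1 a b; rewrite mul0n mul1n add0n ltn_addr // => /(_ isT).
rewrite !psaddE !psoppE [tele_sum a.+1 _ _ _]order_tele_sum ?mul1n ?mul0n ?addn0 //.
rewrite subr0 => /eqP.
rewrite subr_eq0 ps_sumE => /eqP <-; rewrite /tele_sum ps_sumE.
apply: (big_ord_vanishing_widen (F := fun m => tele_term 0 m a b)) => [|m le_bm].
  by rewrite addSn ltnS leq_addr.
by apply: order_tele_term0; rewrite mul0n add0n mul1n.
Qed.

Lemma lhs_term0 : lhs_term 0 = psinv (den q 0).
Proof.
rewrite /lhs_term /xweight /invden_prod /qfact big_geq // big_ord1.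
by rewrite !expr0 !mulr1 rmorph1 !mul1r.
Qed.

Lemma tele_term00 : tele_term 0 0 = psinv (den q 0) - psC p * Y * psinv (den q 0).
Proof.
rewrite /tele_term /xweight /yweight /invden_prod /qfact big_geq // big_ord1 /=.
by rewrite !expr0 !expr1 !mulr1 !rmorph1 !mul1r mulrBl mul1r.
Qed.

Lemma lhs_tail_coef a b :
  \sum_(k < a) lhs_term k.+1 a b =
  - (psC p * Y * psinv (den q 0)) a b + \sum_(m < b) tele_term 0 m.+1 a b.
Proof.
have := lhs_rhs_coef a b; rewrite !big_ord_recl lhs_term0 tele_term00 psaddE psoppE.
under eq_bigr do rewrite lift0; under [in RHS]eq_bigr do rewrite lift0.
move=> coefE.
by apply: (addrI (psinv (den q 0) a b)); rewrite coefE; ring.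
Qed.

Lemma lhs_summandE i :
  psmul (psC (q ^+ i * qfact q i))
    (psmul (psexp X i)
      (psmul (psexp Y i) (\big[@psmul R/psC 1]_(j < i.+1) psinv (den q j)))) =
  lhs_term i.
Proof. by rewrite /lhs_term /xweight -!mulrA -!psexpE. Qed.

Lemma rhs_summandE i :
  psmul
    (psmul (psC (q ^- (i * i + i + 1)))
      (psmul (psexp Y i) (psadd (psC (q ^+ (2 * i + 1))) (psopp Y))))
    (psinv (den q i)) =
  tele_term 0 i.
Proof.
set N := (i * i + i + 1)%N.
have pN_q : psC (p ^+ (i * i.-1)) = psC (p ^+ N) * psC (q ^+ (2 * i + 1)) :> ps R.
  have eN : N = (2 * i + 1 + i * i.-1)%N by rewrite /N; case: (i) => //= j; nia.
  by rewrite -rmorphM eN exprD mulrAC [p ^+ _ * _]mulrC expr_mulV mul1r.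
have p_pN : psC p * psC (p ^+ (i.+1 * i.+1.-1)) = psC (p ^+ N) :> ps R.
  by rewrite -rmorphM -exprS /N /=; congr (psC (_ ^+ _)); nia.
transitivity (psC (p ^+ N) * (Y ^+ i * (psC (q ^+ (2 * i + 1)) - Y)) *
  psinv (den q i)); first by rewrite psexpE -exprVn.
rewrite /tele_term /xweight /yweight /invden_prod /qfact big_geq // big_ord1 addn0.
by rewrite !expr0 expr1 !mulr1 rmorph1 !mul1r pN_q [psC p * _]mulrA p_pN exprS; ring.
Qed.

Lemma rhs_correctionE :
  psmul Y (psinv (psscale q (psadd (psC 1) (psopp X)))) =
  psC p * Y * psinv (den q 0).
Proof.
have den0E : den q 0 = psadd (psC 1) (psopp X).
  by rewrite denE /qint big_ord1 big_ord0 expr0 !mul1r rmorph0 mul0r addr0.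
rewrite (@psinv_uniq _ _ (psC p * psinv (den q 0))); first by rewrite [RHS]mulrAC [RHS]mulrC.
  by rewrite /psscale /psadd /psopp /psC /psX /= subr0 mulr1.
by rewrite psscaleE -den0E mulrACA -rmorphM mulVr // rmorph1 mul1r mulVden.
Qed.

End Identity.

Unset Implicit Arguments.

Theorem mainTheorem6 (R : comUnitRingType) (q : R) (hq : q \is a GRing.unit) :
  exists L T : ps R,
    has_sum (fun k => let i := k.+1 in
      psmul (psC (q ^+ i * qfact q i))
        (psmul (psexp (psX R) i)
          (psmul (psexp (psY R) i)
            (\big[@psmul R/psC 1]_(j < i.+1) psinv (den q j))))) L /\
    has_sum (fun k => let i := k.+1 in
      psmul
        (psmul (psC (q ^- (i * i + i + 1)))
          (psmul (psexp (psY R) i) (psadd (psC (q ^+ (2 * i + 1))) (psopp (psY R)))))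
        (psinv (den q i))) T /\
    forall a b : nat,
      L a b = psadd (psopp (psmul (psY R) (psinv (psscale q (psadd (psC 1) (psopp (psX R)))))))
                    T a b.
Proof.
exists (fun a b => \sum_(k < a) lhs_term q k.+1 a b).
exists (fun a b => \sum_(k < b) tele_term q 0 k.+1 a b).
split; [|split].
- apply: (eq_has_sum (fun k => lhs_summandE q k.+1)).
  apply: has_sum_finite => a b k le_ak.
  by apply: order_lhs_term; rewrite mul1n mul0n addn0.
- apply: (eq_has_sum (fun k => rhs_summandE hq k.+1)).
  apply: has_sum_finite => a b k le_bk.
  by apply: order_tele_term0; rewrite mul0n mul1n add0n.
- by move=> a b; rewrite /psadd /psopp rhs_correctionE // lhs_tail_coef.
Qed.
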